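(* Let $\mathcal{T}$ be an MPQ-tree of an interval graph $G=(V,E)$, let $(x,y)\in E$ with $x$ over $y$ and $node(x)\neq node(y)$. If $node(y)$ is a Q-node, then $(x,y)$ is not an interval edge.
   Context: Graphs are finite and simple; for $G=(V,E)$ and $e\in E$, $G-e=(V,E\setminus\{e\})$. An edge $(x,y)\in E$ of an interval graph $G$ is an interval edge if $G-(x,y)$ is an interval graph. An MPQ-tree of an interval graph $G=(V,E)$, $V=\{1,\dots,n\}$, is a rooted plane tree whose nodes are P-nodes and Q-nodes. Each P-node carries a (possibly empty) set of vertices. A Q-node has $k\ge 3$ ordered positions $1,\dots,k$; position $i$ carries a set $S_i\subseteq V$ (the $i$-th section) and a child subtree $T_i$, which may be empty. Every vertex $v$ is assigned to exactly one node $node(v)$: either $v$ lies in the set of the P-node $node(v)$, or $node(v)$ is a Q-node and $v$ lies exactly in the sections $S_{l(v)},\dots,S_{r(v)}$ of it, with $l(v)<r(v)$. For a node with child subtrees $T_1,\dots,T_k$, $V_i$ denotes the set of vertices assigned to nodes of $T_i$ ($V_i=\emptyset$ if $T_i$ is empty). The maximal cliques of $G$ are in bijection with the descending paths from the root which at a P-node continue into one of its children (stopping if there is none) and at a Q-node choose a position $i$ and continue into $T_i$ (stopping if $T_i$ is empty); the clique is the union of the sets of the visited P-nodes and the chosen sections. Reading these cliques left to right gives a linear order of the maximal cliques, and the orders obtained this way after arbitrarily permuting children of P-nodes and reversing the positions of Q-nodes are exactly the orders of the maximal cliques of $G$ in which the cliques containing any fixed vertex are consecutive. Moreover, for every Q-node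 with sections $S_1,\dots,S_k$: (a) $V_1\neq\emptyset$ and $V_k\ne\emptyset$; (b) $S_1\subseteq S_2$ and $S_k\subseteq S_{k-1}$; (c) $S_{i-1}\cap S_i\neq\emptyset$ for $2\le i\le k$; (d) $S_{i-1}\neq S_i$ for $2\le i\le k$; (e) $(S_i\cap S_{i+1})\setminus S_1\neq\emptyset$ and $(S_{i-1}\cap S_i)\setminus S_k\neq\emptyset$ for $2\le i\le k-1$; (f) $(S_{i-1}\cup V_{i-1})\setminus S_i\neq\emptyset$ and $(S_i\cup V_i)\setminus S_{i-1}\neq\emptyset$ for $2\le i\le k$; and further (g) no empty P-node has an empty P-node as its parent, (h) no P-node has exactly one child whose root is a P-node, (i) every child subtree of a P-node is nonempty. We say $x$ is over $y$ if $node(x)$ is the lowest common ancestor of $node(x)$ and $node(y)$ in $\mathcal{T}$. *)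

From HB Require Import structures.
From Stdlib Require Lists.List Sorting.Permutation.
From mathcomp Require Import all_boot.

Set Implicit Arguments.
Unset Strict Implicit.
Unset Printing Implicit Defensive.

Definition simple_graph (T : finType) (e : rel T) : Prop :=
  symmetric e /\ irreflexive e.

Definition remove_edge (T : finType) (e : rel T) (x y : T) : rel T :=
  fun u v => e u v && ~~ (((u == x) && (v == y)) || ((u == y) && (v == x))).

(* Interval graph: vertices get closed intervals [l v, r v] (finite graphs:
   integer endpoints suffice), adjacent distinct vertices = intersecting. *)
Definition interval_graph (T : finType) (e : rel T) : Prop :=
  exists I : T -> nat * nat,
    (forall v, (I v).1 <= (I v).2) /\
    (forall u v, u != v ->
       (e u v <-> ((I u).1 <= (I v).2) && ((I v).1 <= (I u).2))).

Definition clique (T : finType) (e : rel T) (C : {set T}) : bool :=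
  [forall u in C, forall v in C, (u != v) ==> e u v].

Definition max_clique (T : finType) (e : rel T) (C : {set T}) : bool :=
  maxset (clique e) C.

(* A Q-node carries the list of its positions; position i carries the
   section S_i and an optional (possibly empty) child subtree T_i. *)
Inductive mpq (T : finType) : Type :=
| PNode : {set T} -> seq (mpq T) -> mpq T
| QNode : seq ({set T} * option (mpq T)) -> mpq T.

Arguments PNode {T}.
Arguments QNode {T}.

Section MPQ.
Variable T : finType.

Fixpoint verts (t : mpq T) : {set T} :=
  match t with
  | PNode X ch => X :|: foldr (fun c A => verts c :|: A) set0 ch
  | QNode pos => foldr (fun p A =>
                   p.1 :|: (if p.2 is Some c then verts c else set0) :|: A)
                   set0 pos
  end.

Definition optverts (oc : option (mpq T)) : {set T} :=
  if oc is Some c then verts c else set0.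

Fixpoint subtrees (t : mpq T) : seq (mpq T) :=
  t :: match t with
       | PNode _ ch => flatten (map subtrees ch)
       | QNode pos => flatten (map (fun p =>
                        if p.2 is Some c then subtrees c else [::]) pos)
       end.

(* node addresses: a list of child indices (for a Q-node, the index is the
   position whose child subtree is entered) *)
Fixpoint subtree_at (t : mpq T) (a : seq nat) : option (mpq T) :=
  match a with
  | [::] => Some t
  | i :: a' =>
      match t with
      | PNode _ ch => if onth ch i is Some c then subtree_at c a' else None
      | QNode pos => if onth pos i is Some (_, Some c) then subtree_at c a'
                     else None
      end
  end.

Definition occurs_at (t : mpq T) (v : T) (a : seq nat) : Prop :=
  match subtree_at t a with
  | Some (PNode X _) => v \in X
  | Some (QNode pos) => has (fun p : {set T} * option (mpq T) => v \in p.1) pos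
  | None => False
  end.

Definition assigned (t : mpq T) (v : T) (a : seq nat) : Prop := occurs_at t v a.

Definition assignment_ok (t : mpq T) : Prop :=
  forall v : T,
    (exists a, assigned t v a /\ forall b, assigned t v b -> b = a) /\
    (forall a pos, assigned t v a -> subtree_at t a = Some (QNode pos) ->
       exists l r, [/\ l < r, r < size pos &
         forall i, i < size pos ->
           (v \in (nth (set0, None) pos i).1) = (l <= i <= r)]).

Fixpoint cliques (t : mpq T) : seq {set T} :=
  match t with
  | PNode X ch =>
      if ch is [::] then [:: X]
      else flatten (map (fun c => map (setU X) (cliques c)) ch)
  | QNode pos =>
      flatten (map (fun p => match p.2 with
                             | None => [:: p.1]
                             | Some c => map (setU p.1) (cliques c)
                             end) pos)
  end.

Inductive tequiv : mpq T -> mpq T -> Prop :=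
| tequivP X ch ch1 ch2 :
    List.Forall2 tequiv ch ch1 -> Permutation.Permutation ch1 ch2 ->
    tequiv (PNode X ch) (PNode X ch2)
| tequivQ pos pos' :
    List.Forall2 pequiv pos pos' -> tequiv (QNode pos) (QNode pos')
| tequivQrev pos pos' :
    List.Forall2 pequiv pos pos' -> tequiv (QNode pos) (QNode (rev pos'))
with pequiv : {set T} * option (mpq T) -> {set T} * option (mpq T) -> Prop :=
| pequivN X : pequiv (X, None) (X, None)
| pequivS X c c' : tequiv c c' -> pequiv (X, Some c) (X, Some c').

Definition consecutive (s : seq {set T}) : Prop :=
  forall (v : T) i j k, i <= j -> j <= k -> k < size s ->
    v \in nth set0 s i -> v \in nth set0 s k -> v \in nth set0 s j.

Definition sec (pos : seq ({set T} * option (mpq T))) i : {set T} :=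
  (nth (set0, None) pos i).1.
Definition Vpos (pos : seq ({set T} * option (mpq T))) i : {set T} :=
  optverts (nth (set0, None) pos i).2.

(* local conditions (a)-(h) (0-based indices; k = size pos) *)
Definition node_ok (u : mpq T) : Prop :=
  match u with
  | QNode pos =>
      let k := size pos in
      [/\ 3 <= k,
       Vpos pos 0 != set0 /\ Vpos pos k.-1 != set0,
       sec pos 0 \subset sec pos 1 /\ sec pos k.-1 \subset sec pos k.-2,
       (forall i, 1 <= i < k ->
          [/\ sec pos i.-1 :&: sec pos i != set0,
              sec pos i.-1 != sec pos i,
              (sec pos i.-1 :|: Vpos pos i.-1) :\: sec pos i != set0 &
              (sec pos i :|: Vpos pos i) :\: sec pos i.-1 != set0]) &
       (forall i, 1 <= i -> i <= k - 2 ->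
          ((sec pos i :&: sec pos i.+1) :\: sec pos 0 != set0) /\
          ((sec pos i.-1 :&: sec pos i) :\: sec pos k.-1 != set0))]
  | PNode X ch =>
      (X = set0 -> forall c, List.In c ch -> forall X' ch', c <> PNode X' ch' \/ X' != set0)
      /\
      (forall X' ch', ch <> [:: PNode X' ch'])
      (* (i) holds by construction: P-node children are (nonempty) trees *)
  end.

End MPQ.

Definition is_MPQ_tree (T : finType) (e : rel T) (t : mpq T) : Prop :=
  [/\ assignment_ok t,
      (* maximal cliques are in bijection with descending paths *)
      uniq (cliques t) /\ (forall C, (C \in cliques t) = max_clique e C),
      (forall s : seq {set T},
         (exists t', tequiv t t' /\ cliques t' = s) <->
         [/\ uniq s, (forall C, (C \in s) = max_clique e C) & consecutive s]) &
      (forall u, List.In u (subtrees t) -> node_ok u)].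

(* x is over y: node(x) is the lowest common ancestor of node(x) and node(y),
   i.e. the address of node(x) is a prefix of that of node(y). *)
Definition is_over (T : finType) (t : mpq T) (x y : T) : Prop :=
  exists ax ay, [/\ assigned t x ax, assigned t y ay & prefix ax ay].

Definition interval_edge (T : finType) (e : rel T) (x y : T) : Prop :=
  e x y /\ interval_graph (remove_edge e x y).

From HB Require Import structures.
From mathcomp Require Import all_boot.
From mathcomp Require Import zify.

Set Implicit Arguments.
Unset Strict Implicit.
Unset Printing Implicit Defensive.

(* Let y be assigned to a Q-node with sections S_1..S_k and let x be assigned
   to a strict ancestor of it, with (x,y) an edge.  The vertex y lies in two
   consecutive sections S_m, S_(m+1); condition (f) at position m+1 provides
   a in (S_m u V_m) \ S_(m+1) and b in (S_(m+1) u V_(m+1)) \ S_m.  Every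
   maximal clique through position m of the Q-node contains a, x and y, and
   every one through position m+1 contains b, x and y, while no maximal clique
   contains both a and b.  Hence x-a-y-b-x is an induced 4-cycle of G-(x,y),
   which no interval graph contains. *)

Section CliquePaths.
Variable T : finType.

(* An address of a node where a descending path stops, with its clique. *)
Notation cpath := (seq nat * {set T})%type.

Definition mpq_nested_ind (P : mpq T -> Prop)
  (HP : forall X ch, (forall c, List.In c ch -> P c) -> P (PNode X ch))
  (HQ : forall pos, (forall Sx c, List.In (Sx, Some c) pos -> P c) ->
        P (QNode pos)) :
  forall t, P t :=
  fix IH t := match t with
  | PNode X ch => HP X ch ((fix IHl (ch : seq (mpq T)) :
         forall c, List.In c ch -> P c :=
       match ch with
       | [::] => fun c H => match H with end
       | c' :: ch' => fun c H => match H with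
           | or_introl E => eq_ind c' P (IH c') c E
           | or_intror H' => IHl ch' c H' end end) ch)
  | QNode pos => HQ pos ((fix IHl (pos : seq ({set T} * option (mpq T))) :
         forall Sx c, List.In (Sx, Some c) pos -> P c :=
       match pos with
       | [::] => fun Sx c H => match H with end
       | p' :: pos' => fun Sx c H => match H with
           | or_introl E =>
               match p' as p0 return p0 = (Sx, Some c) -> P c with
               | (_, Some c') => fun E' => eq_ind c' P (IH c') c
                   (f_equal (fun q => if q.2 is Some d then d else c') E')
               | (_, None) => fun E' => match E' with end
               end E
           | or_intror H' => IHl pos' Sx c H' end end) pos)
  end.

Lemma onth_In (A : Type) (s : seq A) j x : onth s j = Some x -> List.In x s.
Proof.
elim: s j => [|y s IH] [|j] //=; first by case=> ->; left.
by move/IH; right.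
Qed.

Lemma In_flatten_map (A B : Type) (f : A -> seq B) s c w :
  List.In c s -> List.In w (f c) -> List.In w (flatten (map f s)).
Proof.
elim: s => [//|d s IH] /= [-> H|H H']; apply/List.in_app_iff;
  [by left | by right; apply: IH].
Qed.

Lemma prefix_nth (s1 s2 : seq nat) k :
  prefix s1 s2 -> k < size s1 -> nth 0 s2 k = nth 0 s1 k.
Proof. by case/prefixP => s -> Hk; rewrite nth_cat Hk. Qed.

Lemma strict_prefix_size (s1 s2 : seq nat) :
  prefix s1 s2 -> s1 <> s2 -> size s1 < size s2.
Proof.
move=> Hp Hne; rewrite ltn_neqAle size_prefix // andbT; apply/eqP => E.
by apply: Hne; move: Hp; rewrite prefixE E take_size => /eqP.
Qed.

Lemma subtree_at_cat t a b :
  subtree_at t (a ++ b) =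
  if subtree_at t a is Some u then subtree_at u b else (None : option (mpq T)).
Proof.
elim: a t => [//|i a IH] [X ch|pos] /=; first by case: (onth ch i).
by case: (onth pos i) => [[Sx [c|]]|].
Qed.

Lemma sec_size (pos : seq ({set T} * option (mpq T))) w i :
  w \in sec pos i -> i < size pos.
Proof. by rewrite /sec; case: ltnP => // H; rewrite nth_default // in_set0. Qed.

Definition cpaths_P (f : mpq T -> seq cpath) (X : {set T}) :=
  fix go (i : nat) (ch : seq (mpq T)) : seq cpath := match ch with
  | [::] => [::]
  | c :: ch' => [seq (i :: pq.1, X :|: pq.2) | pq <- f c] ++ go i.+1 ch'
  end.

Definition cpaths_Q (f : mpq T -> seq cpath) :=
  fix go (i : nat) (pos : seq ({set T} * option (mpq T))) : seq cpath :=
  match pos with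
  | [::] => [::]
  | (Sx, oc) :: pos' => match oc with
       | None => [:: ([:: i], Sx)]
       | Some c => [seq (i :: pq.1, Sx :|: pq.2) | pq <- f c] end
       ++ go i.+1 pos'
  end.

Fixpoint cpaths (t : mpq T) : seq cpath :=
  match t with
  | PNode X ch => if ch is [::] then [:: ([::], X)] else cpaths_P cpaths X 0 ch
  | QNode pos => cpaths_Q cpaths 0 pos
  end.

Lemma cpaths_P_mem f X i ch p C :
  (p, C) \in cpaths_P f X i ch <-> exists j c q C',
    [/\ onth ch j = Some c, p = (i + j) :: q, C = X :|: C' & (q, C') \in f c].
Proof.
elim: ch i p C => [|c ch IH] i p C /=.
  by split; [rewrite in_nil | case=> [j [c [q [C' [/=]]]]]; rewrite onth0n].
rewrite mem_cat; split.
  case/orP => [/mapP [[q C'] H [-> ->]] | /IH [j [c' [q [C' [H1 H2 H3 H4]]]]]].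
    by exists 0, c, q, C'; rewrite addn0.
  by exists j.+1, c', q, C'; rewrite -addSnnS.
case=> j [c' [q [C' [Ho -> -> Hm]]]].
case: j Ho => [|j] /= Ho.
  case: Ho => E; subst c'; apply/orP; left; apply/mapP; exists (q, C') => //.
  by rewrite addn0.
by apply/orP; right; apply/IH; exists j, c', q, C'; rewrite addSnnS.
Qed.

Lemma cpaths_Q_mem f i pos p C :
  (p, C) \in cpaths_Q f i pos <-> exists j Sx oc, onth pos j = Some (Sx, oc) /\
    match oc with
    | None => p = [:: i + j] /\ C = Sx
    | Some c => exists q C',
        [/\ p = (i + j) :: q, C = Sx :|: C' & (q, C') \in f c]
    end.
Proof.
elim: pos i p C => [|[Sx oc] pos IH] i p C /=.
  by split; [rewrite in_nil | case=> [j [Sx [oc [/=]]]]; rewrite onth0n].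
rewrite mem_cat; split.
  case/orP => [H | /IH [j [Sx' [oc' [H1 H2]]]]].
    exists 0, Sx, oc; split => //; case: oc H => [c|].
      by case/mapP => [[q C'] H [-> ->]]; exists q, C'; rewrite addn0.
    by rewrite inE => /eqP [-> ->]; rewrite addn0.
  by exists j.+1, Sx', oc'; split => //; rewrite -addSnnS.
case=> j [Sx' [oc' [Ho H]]].
case: j Ho H => [|j] /= Ho H.
  case: Ho => <- <- in H *; apply/orP; left; case: oc H => [c|].
    by case=> [q [C' [-> -> Hm]]]; apply/mapP; exists (q, C') => //; rewrite addn0.
  by case=> [-> ->]; rewrite addn0 inE.
apply/orP; right; apply/IH; exists j, Sx', oc'; split => //.
case: oc' Ho H => [c|] Ho; last by case=> [-> ->]; rewrite addSnnS.
by case=> [q [C' [-> -> Hm]]]; exists q, C'; rewrite addSnnS.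
Qed.

Lemma cpaths_cliques t : map snd (cpaths t) = cliques t.
Proof.
have map_step i Y (l : seq cpath) :
    map snd [seq (i :: pq.1, Y :|: pq.2) | pq <- l] = map (setU Y) (map snd l).
  by rewrite -!map_comp.
elim/mpq_nested_ind: t => [X ch IH|pos IH] /=.
  case: ch IH => [//|c ch] IH.
  suff H ch' : (forall c, List.In c ch' -> map snd (cpaths c) = cliques c) ->
     forall i, map snd (cpaths_P cpaths X i ch') =
     flatten (map (fun c => map (setU X) (cliques c)) ch') by apply: H.
  elim: ch' => [//|c' ch' IHl] IH' i /=.
  rewrite map_cat IHl; last by move=> d Hd; apply: IH'; right.
  by rewrite map_step IH' //; left.
suff H pos' : (forall Sx c, List.In (Sx, Some c) pos' ->
                 map snd (cpaths c) = cliques c) ->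
  forall i, map snd (cpaths_Q cpaths i pos') =
  flatten (map (fun p => match p.2 with
                         | None => [:: p.1]
                         | Some c => map (setU p.1) (cliques c)
                         end) pos') by apply: H.
elim: pos' => [//|[Sx oc] pos' IHl] IH' i /=.
rewrite map_cat IHl; last by move=> Sx' d Hd; apply: (IH' Sx'); right.
case: oc IH' => [c|] IH' //=.
by rewrite map_step (IH' Sx) //; left.
Qed.

Definition in_chosen_section (t : mpq T) (a p : seq nat) (v : T) : Prop :=
  forall pos, subtree_at t a = Some (QNode pos) ->
    v \in sec pos (nth 0 p (size a)).

Lemma cpaths_occurs t p C v : (p, C) \in cpaths t -> v \in C ->
  exists a, [/\ prefix a p, occurs_at t v a & in_chosen_section t a p v].
Proof.
elim/mpq_nested_ind: t p C v => [X ch IH|pos IH] p C v.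
  case: ch IH => [|c0 ch0] IH.
    rewrite /= inE => /eqP [-> ->] Hv; exists [::]; split => //;
      by [| move=> pos' []].
  move/cpaths_P_mem => [j [c [q [C' [Ho -> -> Hm]]]]].
  rewrite inE => /orP [Hv|Hv].
    by exists [::]; split => //; by [| move=> pos' []].
  have [a' [Hp Ho' Hq]] := IH c (onth_In Ho) _ _ _ Hm Hv.
  exists (j :: a'); split; first by rewrite /= eqxx.
    by rewrite /occurs_at /= Ho.
  by move=> pos; rewrite /= Ho => /Hq.
move/cpaths_Q_mem => [j [Sx [oc [Ho H]]]].
have Hsec : sec pos j = Sx by rewrite /sec (onth_nth (set0, None) _ _ _ Ho).
have Hhas w : w \in Sx -> occurs_at (QNode pos) w [::].
  move=> Hw; rewrite /occurs_at /=; apply/(has_nthP (set0, None)); exists j.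
    by rewrite -onthTE Ho.
  by rewrite (onth_nth (set0, None) _ _ _ Ho).
case: oc Ho H => [c|] Ho; last first.
  case=> [-> ->] Hv; exists [::]; split => //; first exact: Hhas.
  by move=> pos' [<-]; rewrite /= Hsec.
case=> [q [C' [-> -> Hm]]]; rewrite inE => /orP [Hv|Hv].
  exists [::]; split => //; first exact: Hhas.
  by move=> pos' [<-]; rewrite /= Hsec.
have [a' [Hp Ho' Hq]] := IH Sx c (onth_In Ho) _ _ _ Hm Hv.
exists (j :: a'); split; first by rewrite /= eqxx.
  by rewrite /occurs_at /= Ho.
by move=> pos'; rewrite /= Ho => /Hq.
Qed.

Lemma occurs_cpaths t p C a v : (p, C) \in cpaths t -> prefix a p ->
  occurs_at t v a -> in_chosen_section t a p v -> v \in C.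
Proof.
elim/mpq_nested_ind: t p C a v => [X ch IH|pos IH] p C a v.
  case: ch IH => [|c0 ch0] IH.
    rewrite /= inE => /eqP [-> ->]; rewrite prefixs0 => /eqP ->.
    by rewrite /occurs_at /=.
  move/cpaths_P_mem => [j [c [q [C' [Ho -> -> Hm]]]]].
  case: a => [|i a] /=.
    by move=> _; rewrite /occurs_at /= => Hv _; rewrite inE Hv.
  case/andP => /eqP -> Hp; rewrite /occurs_at /= Ho => Ho' Hq.
  rewrite inE (IH c (onth_In Ho) _ _ _ _ Hm Hp Ho') ?orbT //.
  by move=> pos; move: (Hq pos); rewrite /= Ho.
move/cpaths_Q_mem => [j [Sx [oc [Ho H]]]].
have Hsec : sec pos j = Sx by rewrite /sec (onth_nth (set0, None) _ _ _ Ho).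
case: a => [|i a].
  move=> _ _ /(_ pos erefl) /=.
  case: oc Ho H => [c|] Ho.
    by case=> [q [C' [-> -> Hm]]]; rewrite /= Hsec inE => ->.
  by case=> [-> ->]; rewrite /= Hsec.
case: oc Ho H => [c|] Ho; last first.
  case=> [-> ->]; rewrite prefix_cons prefixs0 => /andP [/eqP -> /eqP ->].
  by rewrite /occurs_at /= Ho.
case=> [q [C' [-> -> Hm]]] /andP [/eqP -> Hp].
rewrite /occurs_at /= Ho => Ho' Hq.
rewrite inE (IH Sx c (onth_In Ho) _ _ _ _ Hm Hp Ho') ?orbT //.
by move=> pos'; move: (Hq pos'); rewrite /= Ho.
Qed.

Lemma cpathsP_intro X ch j c q C :
  onth ch j = Some c -> (q, C) \in cpaths c ->
  (j :: q, X :|: C) \in cpaths (PNode X ch).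
Proof.
case: ch => [|c0 ch0]; first by rewrite onth0n.
by move=> Ho Hm; apply/cpaths_P_mem; exists j, c, q, C.
Qed.

Lemma cpathsQS_intro pos j Sx c q C :
  onth pos j = Some (Sx, Some c) -> (q, C) \in cpaths c ->
  (j :: q, Sx :|: C) \in cpaths (QNode pos).
Proof.
by move=> Ho Hm; apply/cpaths_Q_mem; exists j, Sx, (Some c); split => //;
  exists q, C.
Qed.

Lemma cpathsQN_intro pos j Sx :
  onth pos j = Some (Sx, None) -> ([:: j], Sx) \in cpaths (QNode pos).
Proof. by move=> Ho; apply/cpaths_Q_mem; exists j, Sx, None. Qed.

Lemma cpaths_extend t a u q C' : subtree_at t a = Some u ->
  (q, C') \in cpaths u -> exists C, (a ++ q, C) \in cpaths t /\ C' \subset C.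
Proof.
elim: a t => [|i a IH] t /=; first by move=> [->] Hm; exists C'.
case: t => [X ch|pos].
  case Ho: (onth ch i) => [c|] // Hs Hm.
  have [C1 [H1 H2]] := IH c Hs Hm.
  exists (X :|: C1); split; first exact: cpathsP_intro Ho H1.
  exact: subset_trans H2 (subsetUr _ _).
case Ho: (onth pos i) => [[Sx [c|]]|] // Hs Hm.
have [C1 [H1 H2]] := IH c Hs Hm.
exists (Sx :|: C1); split; first exact: cpathsQS_intro Ho H1.
exact: subset_trans H2 (subsetUr _ _).
Qed.

Definition well_formed (u : mpq T) : Prop :=
  forall w, List.In w (subtrees u) -> node_ok w.

Lemma well_formedP X ch c :
  well_formed (PNode X ch) -> List.In c ch -> well_formed c.
Proof. by move=> H Hc w Hw; apply: H; right; exact: (In_flatten_map Hc Hw). Qed.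

Lemma well_formedQ pos Sx c :
  well_formed (QNode pos) -> List.In (Sx, Some c) pos -> well_formed c.
Proof.
move=> H Hc w Hw; apply: H; right.
exact: (In_flatten_map (f := fun p : {set T} * option (mpq T) =>
   if p.2 is Some c then subtrees c else [::]) Hc Hw).
Qed.

Lemma subtree_at_well_formed (t : mpq T) a u :
  well_formed t -> subtree_at t a = Some u -> well_formed u.
Proof.
elim: a t => [|i a IH] t /=; first by move=> H [<-].
case: t => [X ch|pos] Hok.
  by case Ho: (onth ch i) => [c|] // /IH; apply; exact: well_formedP Hok (onth_In Ho).
case Ho: (onth pos i) => [[Sx [c|]]|] // /IH; apply.
exact: well_formedQ Hok (onth_In Ho).
Qed.

(* A well-formed tree has a path: Q-nodes have at least three positions. *)
Lemma cpaths_ne u : well_formed u -> exists q C, (q, C) \in cpaths u.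
Proof.
elim/mpq_nested_ind: u => [X ch IH|pos IH] Hok.
  case: ch IH Hok => [|c0 ch0] IH Hok; first by exists [::], X; rewrite inE.
  have [q [C Hm]] := IH c0 (or_introl erefl) (well_formedP Hok (or_introl erefl)).
  by exists (0 :: q), (X :|: C); exact: cpathsP_intro Hm.
have [H3 _ _ _ _] := Hok _ (or_introl erefl).
case: pos IH Hok H3 => [//|[Sx [c|]] pos] IH Hok _.
  have Hin : List.In (Sx, Some c) ((Sx, Some c) :: pos) by left.
  have [q [C Hm]] := IH Sx c Hin (well_formedQ Hok Hin).
  by exists (0 :: q), (Sx :|: C); exact: cpathsQS_intro Hm.
by exists [:: 0], Sx; apply: cpathsQN_intro.
Qed.

Lemma vertsP (X : {set T}) (ch : seq (mpq T)) (v : T) :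
  v \in verts (PNode X ch) ->
  v \in X \/ exists j c, onth ch j = Some c /\ v \in verts c.
Proof.
elim: ch => [|c ch IH] /=; first by rewrite inE in_set0 orbF; left.
rewrite !inE => /or3P [H|H|H]; first by left.
  by right; exists 0, c.
case: IH; first by rewrite inE H orbT.
  by left.
by move=> [j [d [H1 H2]]]; right; exists j.+1, d.
Qed.

Lemma vertsQ (pos : seq ({set T} * option (mpq T))) (v : T) :
  v \in verts (QNode pos) -> exists j Sx oc, onth pos j = Some (Sx, oc) /\
    (v \in Sx \/ exists c, oc = Some c /\ v \in verts c).
Proof.
elim: pos => [|[Sx oc] pos IH] /=; first by rewrite in_set0.
rewrite !inE -orbA => /or3P [H|H|H].
- by exists 0, Sx, oc; split => //; left.
- case: oc H => [c|] H; last by rewrite in_set0 in H.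
  by exists 0, Sx, (Some c); split => //; right; exists c.
- by have [j [Sx' [oc' [H1 H2]]]] := IH H; exists j.+1, Sx', oc'.
Qed.

Lemma verts_cpaths u v : well_formed u -> v \in verts u ->
  exists q C, (q, C) \in cpaths u /\ v \in C.
Proof.
elim/mpq_nested_ind: u => [X ch IH|pos IH] Hok.
  case/vertsP => [Hv|[j [c [Ho Hv]]]].
    have [q [C Hm]] := cpaths_ne Hok.
    exists q, C; split => //; apply: (occurs_cpaths (a := [::]) Hm).
    - exact: prefix0s.
    - exact: Hv.
    - by move=> pos [].
  have [q [C [Hm HC]]] := IH c (onth_In Ho) (well_formedP Hok (onth_In Ho)) Hv.
  exists (j :: q), (X :|: C); split; first exact: cpathsP_intro Ho Hm.
  by rewrite inE HC orbT.
case/vertsQ => [j [Sx [oc [Ho [Hv|[c [Ec Hv]]]]]]].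
  case: oc Ho => [c|] Ho; last by exists [:: j], Sx; split => //; apply: cpathsQN_intro.
  have Hin := onth_In Ho.
  have [q [C Hm]] := cpaths_ne (well_formedQ Hok Hin).
  exists (j :: q), (Sx :|: C); split; first exact: cpathsQS_intro Ho Hm.
  by rewrite inE Hv.
subst oc; have Hin := onth_In Ho.
have [q [C [Hm HC]]] := IH Sx c Hin (well_formedQ Hok Hin) Hv.
exists (j :: q), (Sx :|: C); split; first exact: cpathsQS_intro Ho Hm.
by rewrite inE HC orbT.
Qed.

End CliquePaths.

(* An irreflexive interval graph has no induced 4-cycle x-a-y-b-x: the
   intervals of x and y are disjoint, say I_x < I_y, and then both I_a and
   I_b meet the gap between them, so they intersect. *)
Lemma interval_no_induced_C4 (T : finType) (f : rel T) x a y b :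
  interval_graph f -> irreflexive f -> x != y -> a != b ->
  f x a -> f a y -> f y b -> f b x -> ~~ f x y -> ~~ f a b -> False.
Proof.
move=> [I [_ HI]] Hirr nxy nab Fxa Fay Fyb Fbx Nxy Nab.
have neq u v : f u v -> u != v by move=> Huv; apply/eqP => E; rewrite E Hirr in Huv.
move: ((HI _ _ (neq _ _ Fxa)).1 Fxa) ((HI _ _ (neq _ _ Fay)).1 Fay).
move: ((HI _ _ (neq _ _ Fyb)).1 Fyb) ((HI _ _ (neq _ _ Fbx)).1 Fbx).
have Dxy : ~~ (((I x).1 <= (I y).2) && ((I y).1 <= (I x).2)).
  by apply: contra Nxy => /(HI _ _ nxy).
have Dab : ~~ (((I a).1 <= (I b).2) && ((I b).1 <= (I a).2)).
  by apply: contra Nab => /(HI _ _ nab).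
move: Dxy Dab; rewrite !negb_and -!ltnNge.
move: (I x).1 (I x).2 (I a).1 (I a).2 (I y).1 (I y).2 (I b).1 (I b).2 => *.
lia.
Qed.

Section MPQTree.
Variables (T : finType) (e : rel T) (t : mpq T).
Hypothesis Hsg : simple_graph e.
Hypothesis HT : is_MPQ_tree e t.

Lemma well_formed_tree : well_formed t.
Proof. by case: HT. Qed.

Lemma assigned_unique v a b : assigned t v a -> assigned t v b -> a = b.
Proof.
case: HT => Hass _ _ _; have [[c [_ Hc]] _] := Hass v.
by move=> /Hc -> /Hc ->.
Qed.

Lemma edge_neq u v : e u v -> u != v.
Proof. by case: Hsg => _ Hirr Euv; apply/eqP => E; rewrite E Hirr in Euv. Qed.

Lemma cpaths_max_clique p C : (p, C) \in cpaths t -> max_clique e C.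
Proof.
case: HT => _ [_ Hmem] _ _ Hm.
by rewrite -Hmem -cpaths_cliques; apply/mapP; exists (p, C).
Qed.

Lemma edge_in_path_clique u v : e u v ->
  exists p C, [/\ (p, C) \in cpaths t, u \in C & v \in C].
Proof.
move=> Euv; have [Hsym _] := Hsg.
have Hc : clique e [set u; v].
  apply/forallP => a; apply/implyP => Ha; apply/forallP => b; apply/implyP => Hb.
  apply/implyP => Hab; move: Ha Hb Hab; rewrite !inE.
  by case/orP => /eqP -> /orP [/eqP ->|/eqP ->]; rewrite ?eqxx // (Hsym v u).
have [A HA Hsub] := maxset_exists Hc.
have : A \in cliques t by case: HT => _ [_ ->] _ _.
rewrite -cpaths_cliques => /mapP [[p C] Hm /= EA].
by exists p, C; split => //; rewrite -EA; apply: (subsetP Hsub); rewrite !inE eqxx ?orbT.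
Qed.

Lemma path_clique_edge p C u v :
  (p, C) \in cpaths t -> u \in C -> v \in C -> u != v -> e u v.
Proof.
move=> /cpaths_max_clique /maxsetp /forallP /(_ u) /implyP Hc Hu.
by move: (Hc Hu) => /forallP /(_ v) /implyP H /H /implyP.
Qed.

(* If x is assigned strictly above y and adjacent to y, then x lies in every
   maximal clique whose path passes through node(y): some such clique contains
   x, and membership of x only depends on the part of the path above node(y). *)
Lemma ancestor_in_cliques x y ax ay : e x y ->
  assigned t x ax -> assigned t y ay -> prefix ax ay -> size ax < size ay ->
  forall p C, (p, C) \in cpaths t -> prefix ay p -> x \in C.
Proof.
move=> Exy Hx Hy Hpre Hlt p C Hm Hp.
have [p0 [C0 [Hm0 Hx0 Hy0]]] := edge_in_path_clique Exy.
have [a1 [Hp1 Ho1 _]] := cpaths_occurs Hm0 Hy0.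
have [a2 [_ Ho2 Hq2]] := cpaths_occurs Hm0 Hx0.
rewrite (assigned_unique Ho1 Hy) in Hp1; rewrite (assigned_unique Ho2 Hx) in Hq2.
apply: (occurs_cpaths Hm (prefix_trans Hpre Hp) Hx) => pos Hs.
by move: (Hq2 pos Hs); rewrite (prefix_nth Hp1 Hlt) (prefix_nth Hp Hlt).
Qed.

Section QNodeBelow.
Variables (ay : seq nat) (pos : seq ({set T} * option (mpq T))).
Hypothesis HQ : subtree_at t ay = Some (QNode pos).

Lemma assigned_sections_convex w i1 i2 i3 : assigned t w ay ->
  i1 <= i3 <= i2 -> w \in sec pos i1 -> w \in sec pos i2 -> w \in sec pos i3.
Proof.
move=> Hw /andP [H13 H32] H1 H2.
have Hs2 := sec_size H2.
case: HT => Hass _ _ _; have [lw [rw [_ _ Hr]]] := (Hass w).2 ay pos Hw HQ.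
move: H1 H2; rewrite /sec !Hr //; last 2 first.
- exact: leq_ltn_trans H32 Hs2.
- exact: leq_ltn_trans (leq_trans H13 H32) Hs2.
by move=> /andP [A1 _] /andP [_ A4]; rewrite (leq_trans A1 H13) (leq_trans H32 A4).
Qed.

Lemma assigned_two_sections w : assigned t w ay ->
  exists m, [/\ m.+1 < size pos, w \in sec pos m & w \in sec pos m.+1].
Proof.
case: HT => Hass _ _ _ Hw.
have [l [r [Hlr Hrs Hr]]] := (Hass w).2 ay pos Hw HQ.
have Hl1 : l.+1 < size pos by apply: leq_ltn_trans Hrs.
exists l; rewrite /sec !Hr ?leqnn ?leqnSn ?Hlr ?(ltnW Hlr) ?(ltnW Hl1) //.
Qed.

Lemma section_in_cliques w m q C : assigned t w ay -> w \in sec pos m ->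
  (ay ++ m :: q, C) \in cpaths t -> w \in C.
Proof.
move=> Hw Hwm Hm; apply: (occurs_cpaths Hm (prefix_prefix _ _) Hw).
by move=> pos'; rewrite HQ => -[<-]; rewrite nth_cat ltnn subnn.
Qed.

Lemma position_clique w m : m < size pos -> w \in sec pos m :|: Vpos pos m ->
  exists q C, (ay ++ m :: q, C) \in cpaths t /\ w \in C.
Proof.
move=> Hm; case Ho: (onth pos m) => [[Sm oc]|]; last by move: Hm; rewrite -onthTE Ho.
rewrite /sec /Vpos (onth_nth (set0, None) _ _ _ Ho) inE /= => Hw.
have [q [C' [Hq HwC']]] :
    exists q C', (m :: q, C') \in cpaths (QNode pos) /\ w \in C'.
  case: oc Ho Hw => [c|] Ho Hw; last first.
    exists [::], Sm; split; first exact: cpathsQN_intro.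
    by move: Hw; rewrite in_set0 orbF.
  have Hokc := well_formedQ (subtree_at_well_formed well_formed_tree HQ) (onth_In Ho).
  have [q [C [Hq HC]]] : exists q C, (q, C) \in cpaths c /\ (w \in Sm) || (w \in C).
    case/orP: Hw => Hw; last first.
      by have [q [C [Hq HC]]] := verts_cpaths Hokc Hw; exists q, C; rewrite HC orbT.
    by have [q [C Hq]] := cpaths_ne Hokc; exists q, C; rewrite Hw.
  by exists q, (Sm :|: C); split; [exact: cpathsQS_intro Ho Hq | rewrite inE].
have [C [HqC HC]] := cpaths_extend HQ Hq.
by exists q, C; split => //; exact: (subsetP HC).
Qed.
Lemma position_vertex_address w m : m < size pos -> w \in sec pos m :|: Vpos pos m ->
  exists al, assigned t w al /\
    ((al = ay /\ w \in sec pos m) \/ exists s, al = ay ++ m :: s).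
Proof.
move=> Hm; rewrite inE => /orP [Hw|Hw].
  exists ay; split; last by left.
  by rewrite /assigned /occurs_at HQ; apply/(has_nthP (set0, None)); exists m.
case Ho: (onth pos m) => [[Sm [c|]]|]; last 2 first.
- by move: Hw; rewrite /Vpos (onth_nth (set0, None) _ _ _ Ho) in_set0.
- by move: Hm; rewrite -onthTE Ho.
move: Hw; rewrite /Vpos (onth_nth (set0, None) _ _ _ Ho) /= => Hw.
have Hokc := well_formedQ (subtree_at_well_formed well_formed_tree HQ) (onth_In Ho).
have [q [C' [Hq Hw']]] := verts_cpaths Hokc Hw.
have [s [_ Hos _]] := cpaths_occurs Hq Hw'.
exists (ay ++ m :: s); split; last by right; exists s.
by rewrite /assigned /occurs_at subtree_at_cat HQ /= Ho.
Qed.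

Lemma position_vertex_cliques w m p C : m < size pos ->
  w \in sec pos m :|: Vpos pos m -> (p, C) \in cpaths t -> w \in C ->
  nth 0 p (size ay) = m \/
  [/\ assigned t w ay, w \in sec pos m & w \in sec pos (nth 0 p (size ay))].
Proof.
move=> Hm Hw Hp HwC.
have [al [Hal Hcase]] := position_vertex_address Hm Hw.
have [al' [Hpre Ho Hq]] := cpaths_occurs Hp HwC.
rewrite (assigned_unique Ho Hal) in Hpre Hq.
case: Hcase => [[E Hwm]|[s E]]; subst al; first by right; split; last exact: Hq.
left; rewrite (prefix_nth Hpre); last by rewrite size_cat /= addnS ltnS leq_addr.
by rewrite nth_cat ltnn subnn.
Qed.

(* The witnesses of condition (f) at position m+1 never share a clique: a
   clique through position m (resp. m+1) cannot contain b (resp. a), and if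
   both are vertices of the Q-node, convexity of their sections forbids it. *)
Lemma separated_positions a b m : m.+1 < size pos ->
  a \in (sec pos m :|: Vpos pos m) :\: sec pos m.+1 ->
  b \in (sec pos m.+1 :|: Vpos pos m.+1) :\: sec pos m ->
  forall p C, (p, C) \in cpaths t -> a \in C -> b \in C -> False.
Proof.
rewrite !in_setD => Hm /andP [Na Ha] /andP [Nb Hb] p C Hp HaC HbC.
have := position_vertex_cliques (ltnW Hm) Ha Hp HaC.
have := position_vertex_cliques Hm Hb Hp HbC.
set j := nth 0 p (size ay).
case=> [Eb|[Hasb Hbm1 Hbj]]; case=> [Ea|[Hasa Ham Haj]].
- by rewrite Ea in Eb; exact: n_Sn Eb.
- by move: Haj; rewrite Eb (negbTE Na).
- by move: Hbj; rewrite Ea (negbTE Nb).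
case: (leqP j m) => Hj.
  by move: Nb; rewrite (assigned_sections_convex Hasb _ Hbj Hbm1) // Hj leqnSn.
by move: Na; rewrite (assigned_sections_convex Hasa _ Ham Haj) // leqnSn Hj.
Qed.

Lemma separated_pair m : m.+1 < size pos -> exists a b,
  [/\ a \in (sec pos m :|: Vpos pos m) :\: sec pos m.+1,
      b \in (sec pos m.+1 :|: Vpos pos m.+1) :\: sec pos m,
      a != b & ~~ e a b].
Proof.
move=> Hm; have Hok := subtree_at_well_formed well_formed_tree HQ.
have [_ _ _ Hcdf _] := Hok _ (or_introl erefl).
have [_ _ /set0Pn [a Ha] /set0Pn [b Hb]] := Hcdf m.+1 Hm.
have Hsep := separated_positions Hm Ha Hb.
exists a, b; split => //.
  apply/eqP => Eab; move: Ha; rewrite in_setD => /andP [_ Ha].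
  have [q [C [Hq HaC]]] := position_clique (ltnW Hm) Ha.
  by apply: (Hsep _ _ Hq HaC); rewrite -Eab.
apply/negP => /edge_in_path_clique [p [C [Hp HaC HbC]]].
exact: Hsep Hp HaC HbC.
Qed.

Section AboveQNode.
Variables (x : T) (ax : seq nat).
Hypothesis Hx : assigned t x ax.
Hypothesis Hpre : prefix ax ay.
Hypothesis Hlt : size ax < size ay.

Lemma position_vertex_not_above w m : m < size pos ->
  w \in sec pos m :|: Vpos pos m -> w != x.
Proof.
move=> Hm Hw; apply/eqP => E; subst w.
have [al [Hal Hcase]] := position_vertex_address Hm Hw.
rewrite (assigned_unique Hal Hx) in Hcase.
have : size ay <= size ax.
  by case: Hcase => [[-> _]|[s ->]]; rewrite ?size_cat ?leq_addr.
by rewrite leqNgt Hlt.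
Qed.

(* If y (at the Q-node, in S_m) is adjacent to x, then every other vertex w of
   S_m u V_m is adjacent to both: a clique through position m contains all
   three. *)
Lemma position_common_neighbour y m w : e x y -> assigned t y ay ->
  y \in sec pos m -> m < size pos -> w \in sec pos m :|: Vpos pos m -> w != y ->
  e x w /\ e w y.
Proof.
move=> Exy Hy Hym Hm Hw nwy.
have [q [C [Hq HwC]]] := position_clique Hm Hw.
have HxC := ancestor_in_cliques Exy Hx Hy Hpre Hlt Hq (prefix_prefix _ _).
have HyC := section_in_cliques Hy Hym Hq.
split; last exact: path_clique_edge Hq HwC HyC nwy.
by apply: (path_clique_edge Hq HxC HwC); rewrite eq_sym (position_vertex_not_above Hm Hw).
Qed.

End AboveQNode.
End QNodeBelow.
End MPQTree.

Unset Implicit Arguments.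

Theorem mainTheorem9 (T : finType) (e : rel T) (t : mpq T) (x y : T)
  (ax ay : seq nat) :
  simple_graph e -> interval_graph e -> is_MPQ_tree e t ->
  e x y -> is_over t x y ->
  assigned t x ax -> assigned t y ay -> ax <> ay ->
  (exists pos, subtree_at t ay = Some (QNode pos)) ->
  ~ interval_edge e x y.
Proof.
move=> Hsg _ HT Exy [ax' [ay' [Hx' Hy' Hpre]]] Hx Hy Hne [pos HQ] [_ Hiv].
rewrite (assigned_unique HT Hx' Hx) (assigned_unique HT Hy' Hy) in Hpre.
have Hlt := strict_prefix_size Hpre Hne.
have [m [Hm Hym Hym1]] := assigned_two_sections HT HQ Hy.
have [a [b [Ha Hb nab Nab]]] := separated_pair Hsg HT HQ Hm.
move: Ha Hb; rewrite !in_setD => /andP [Na Ha] /andP [Nb Hb].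
have nay : a != y by apply: contraNneq Na => ->.
have nby : b != y by apply: contraNneq Nb => ->.
have nax := position_vertex_not_above HT HQ Hx Hlt (ltnW Hm) Ha.
have nbx := position_vertex_not_above HT HQ Hx Hlt Hm Hb.
have [Exa Eay] := position_common_neighbour Hsg HT HQ Hx Hpre Hlt Exy Hy Hym (ltnW Hm) Ha nay.
have [Exb Eby] := position_common_neighbour Hsg HT HQ Hx Hpre Hlt Exy Hy Hym1 Hm Hb nby.
have [Hsym Hirr] := Hsg.
have nxy := edge_neq Hsg Exy.
have Hirr' : irreflexive (remove_edge e x y) by move=> u; rewrite /remove_edge Hirr.
have Hneq := (negbTE nxy, negbTE nax, negbTE nay, negbTE nbx, negbTE nby, eq_sym y x).
apply: (interval_no_induced_C4 Hiv Hirr' nxy nab);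
  rewrite /remove_edge ?eqxx ?Hneq /= ?andbF ?andbT //.
all: by rewrite Hsym.
Qed.
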